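(* Let $(G,\prec)$ be an $\mathcal{H}$-free ordered graph, let $u\prec v$ be adjacent vertices, and let $X=\{u,v\}\cup\{x\in V(G): u\prec x\prec v,\ ux\in E(G),\ xv\in E(G)\}$. Then $(G[X],\prec|_X)$ is a capped graph.
   Context: An ordered graph is a pair $(G,\prec)$ with $G$ a finite graph and $\prec$ a linear order on $V(G)$. It is capped if for any $a\prec b\prec c\prec d$ with $ac,bd\in E(G)$ we have $ad\in E(G)$. For $a\prec b\prec c\prec d$ with $ac,bd\in E(G)$, $ac$ crosses $bd$. A rotation of $\prec$ is any order obtained by repeatedly making the largest element the smallest. For $p\prec q$, a crossing sequence from $p$ to $q$ is a sequence of distinct edges $e_1,\dots,e_k$ with $p$ the smaller end of $e_1$, $q$ the larger end of $e_k$, and $e_i$ crossing $e_{i+1}$ for $1\le i<k$; if $q\prec p$, a crossing sequence from $p$ to $q$ is one with respect to any rotation $\prec'$ of $\prec$ with $p\prec'q$. $\mathcal{H}$ is the family of ordered graphs containing two non-adjacent vertices $p,q$ with a crossing sequence from $p$ to $q$ and one from $q$ to $p$; $\mathcal{H}$-free means no induced ordered subgraph (induced subgraph with restricted order) lies in $\mathcal{H}$. *)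

From mathcomp Require Import all_boot.
Set Implicit Arguments. Unset Strict Implicit. Unset Printing Implicit Defensive.

(* An ordered graph on n vertices: vertex set 'I_n with its natural order
   (every finite linearly ordered set is isomorphic to such), and a simple
   graph given by a symmetric irreflexive relation e. *)
Definition simple_graph (n : nat) (e : rel 'I_n) :=
  symmetric e /\ irreflexive e.

(* Key of the rotation of the order with threshold t: the vertices >= t
   come first (in order), then the vertices < t.  As t ranges over nat,
   these give exactly the rotations of the order (also of its restriction
   to any subset). *)
Definition rot_key (n t : nat) (x : 'I_n) : nat :=
  if t <= x then x - t else x + n.

Definition crosses (T : Type) (lt : rel T) (f g : T * T) : bool :=
  [&& lt f.1 g.1, lt g.1 f.2 & lt f.2 g.2].

(* A crossing sequence from p to q in the induced subgraph G[S] w.r.t. the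
   strict linear order lt on S; an edge is stored as (smaller end, larger end). *)
Definition crossing_seq_wrt (n : nat) (e : rel 'I_n) (S : {set 'I_n})
    (lt : rel 'I_n) (p q : 'I_n) : Prop :=
  exists s : seq ('I_n * 'I_n),
    [/\ s != [::] /\ uniq s,
        all (fun f => [&& f.1 \in S, f.2 \in S, lt f.1 f.2 & e f.1 f.2]) s,
        (head (p, p) s).1 = p, (last (q, q) s).2 = q
      & sorted (crosses lt) s].

Definition crossing_seq (n : nat) (e : rel 'I_n) (S : {set 'I_n}) (p q : 'I_n) : Prop :=
  if p < q then crossing_seq_wrt e S (fun x y => x < y) p q
  else exists t : nat, rot_key t p < rot_key t q /\
         crossing_seq_wrt e S (fun x y => rot_key t x < rot_key t y) p q.

Definition in_H (n : nat) (e : rel 'I_n) (S : {set 'I_n}) : Prop :=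
  exists p q : 'I_n, [/\ p \in S /\ q \in S, p != q, ~~ e p q,
                        crossing_seq e S p q & crossing_seq e S q p].

Definition H_free (n : nat) (e : rel 'I_n) : Prop :=
  forall S : {set 'I_n}, ~ in_H e S.

Definition capped_on (n : nat) (e : rel 'I_n) (X : {set 'I_n}) : Prop :=
  forall a b c d : 'I_n, a \in X -> b \in X -> c \in X -> d \in X ->
    a < b -> b < c -> c < d -> e a c -> e b d -> e a d.

(** If [a < b < c < d] in [X] with [ac], [bd] edges but [ad] not, then [ac, bd]
    is a crossing sequence from [a] to [d].  Neither [a] nor [d] can be [u] or
    [v] (those are adjacent to every other vertex of [X]), so [u < a < d < v]
    and [ua], [av], [ud], [dv] are edges; in the rotation starting at [d] the
    edges [du] and [va] cross, giving a crossing sequence from [d] back to [a].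
    Hence [{a, d}] witnesses a member of the family H. *)

From mathcomp Require Import all_boot.
From mathcomp Require Import zify.

Set Implicit Arguments.
Unset Strict Implicit.
Unset Printing Implicit Defensive.

Section CrossingPairs.

Variables (n : nat) (e : rel 'I_n) (S : {set 'I_n}).

Lemma crossing_seq_wrt_pair (lt : rel 'I_n) (p x y q : 'I_n) :
  irreflexive lt -> transitive lt ->
  p \in S -> x \in S -> y \in S -> q \in S ->
  lt p x -> lt x y -> lt y q -> e p y -> e x q ->
  crossing_seq_wrt e S lt p q.
Proof.
move=> ltxx lt_trans pS xS yS qS ltpx ltxy ltyq epy exq.
exists [:: (p, y); (x, q)]; split => //=.
- split=> //; rewrite inE andbT; apply: contraTneq ltpx => -[-> _].
  by rewrite ltxx.
- by rewrite pS yS xS qS epy exq (lt_trans _ _ _ ltpx ltxy)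
    (lt_trans _ _ _ ltxy ltyq).
- by rewrite /crosses /= ltpx ltxy ltyq.
Qed.

Lemma crossing_seq_pair (p x y q : 'I_n) :
  p \in S -> x \in S -> y \in S -> q \in S ->
  p < x -> x < y -> y < q -> e p y -> e x q ->
  crossing_seq e S p q.
Proof.
move=> pS xS yS qS ltpx ltxy ltyq epy exq.
rewrite /crossing_seq (ltn_trans ltpx (ltn_trans ltxy ltyq)).
exact: crossing_seq_wrt_pair ltnn ltn_trans pS xS yS qS _ _ _ epy exq.
Qed.

Lemma rot_key_wrap (p x y q : 'I_n) :
  q < p -> p < x -> y < q ->
  [/\ rot_key p p < rot_key p x, rot_key p x < rot_key p y
    & rot_key p y < rot_key p q].
Proof.
move=> ltqp ltpx ltyq; have := ltn_ord x.
rewrite /rot_key leqnn (ltnW ltpx) (leqNgt p q) ltqp (leqNgt p y)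
  (ltn_trans ltyq ltqp) /=.
by split; lia.
Qed.

Lemma crossing_seq_wrap (p x y q : 'I_n) :
  p \in S -> x \in S -> y \in S -> q \in S ->
  q < p -> p < x -> y < q -> e p y -> e x q ->
  crossing_seq e S p q.
Proof.
move=> pS xS yS qS ltqp ltpx ltyq epy exq.
have [kpx kxy kyq] := rot_key_wrap ltqp ltpx ltyq.
rewrite /crossing_seq ltnNge (ltnW ltqp) /=; exists p; split.
  exact: ltn_trans kpx (ltn_trans kxy kyq).
apply: crossing_seq_wrt_pair pS xS yS qS kpx kxy kyq epy exq.
  by move=> z; exact: ltnn.
by move=> z1 z2 z3; exact: ltn_trans.
Qed.

End CrossingPairs.

Definition edge_fan (n : nat) (e : rel 'I_n) (u v : 'I_n) : {set 'I_n} :=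
  [set x | [|| x == u, x == v | [&& u < x, x < v, e u x & e x v]]].

Section EdgeFan.

Variables (n : nat) (e : rel 'I_n) (u v : 'I_n).
Hypotheses (ltuv : u < v) (euv : e u v).

Let X := edge_fan e u v.

Lemma edge_fan_bounds x : x \in X -> u <= x <= v.
Proof.
rewrite inE => /or3P[/eqP-> | /eqP-> | /and4P[ltux ltxv _ _]].
- by rewrite leqnn (ltnW ltuv).
- by rewrite leqnn (ltnW ltuv).
- by rewrite (ltnW ltux) (ltnW ltxv).
Qed.

Lemma edge_fan_adj_left x : x \in X -> x != u -> e u x.
Proof.
by rewrite inE => /or3P[/eqP-> /eqP | /eqP-> _ | /and4P[_ _ eux _] _].
Qed.

Lemma edge_fan_adj_right x : x \in X -> x != v -> e x v.
Proof.
by rewrite inE => /or3P[/eqP-> _ | /eqP-> /eqP | /and4P[_ _ _ exv] _].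
Qed.

Lemma edge_fan_inner x : x \in X -> x != u -> x != v ->
  [/\ u < x, x < v, e u x & e x v].
Proof.
by rewrite inE => /or3P[/eqP-> /eqP | /eqP-> _ /eqP | /and4P[]].
Qed.

Lemma edge_fan_nonadj_inner a d : a \in X -> d \in X -> a < d -> ~~ e a d ->
  [/\ u < a, a < v, e u a & e a v] /\ [/\ u < d, d < v, e u d & e d v].
Proof.
move=> aX dX ltad nead.
have /andP[leua _] := edge_fan_bounds aX.
have /andP[_ ledv] := edge_fan_bounds dX.
have neau : a != u.
  apply: contraNneq nead => Eau.
  by rewrite Eau edge_fan_adj_left // -Eau neq_ltn ltad orbT.
have nedv : d != v.
  apply: contraNneq nead => Edv.
  by rewrite Edv edge_fan_adj_right // -Edv neq_ltn ltad.
split; apply: edge_fan_inner => //.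
- by rewrite neq_ltn (leq_trans ltad ledv).
- by rewrite neq_ltn (leq_ltn_trans leua ltad) orbT.
Qed.

End EdgeFan.

Theorem lemma4p1 (n : nat) (e : rel 'I_n) :
  simple_graph e -> H_free e ->
  forall u v : 'I_n, u < v -> e u v ->
  capped_on e [set x | [|| x == u, x == v | [&& u < x, x < v, e u x & e x v]]].
Proof.
move=> [esym _] Hfree u v ltuv euv a b c d aX _ _ dX ltab ltbc ltcd eac ebd.
apply: contraT => nead; exfalso.
have ltad : a < d := ltn_trans ltab (ltn_trans ltbc ltcd).
have [[ltua _ _ eav] [_ ltdv eud _]] :=
  edge_fan_nonadj_inner ltuv euv aX dX ltad nead.
apply: (Hfree setT); exists a, d; split.
- by rewrite !inE.
- by rewrite neq_ltn ltad.
- exact: nead.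
- by apply: (crossing_seq_pair (x := b) (y := c)); rewrite ?inE.
- by apply: (crossing_seq_wrap (x := v) (y := u)); rewrite ?inE // esym.
Qed.
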